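(* Let $\mathcal{F}$ be a saturated fusion system over a finite $p$-group $S$, and let $\mathcal{F}_0$ be a weakly normal subsystem of $\mathcal{F}$ over $S_0\le S$. Assume that $O^p(\Aut_{\mathcal{F}}(S_0))\le\Aut_{\mathcal{F}_0}(S_0)$. Then $O^p(\Aut_{\mathcal{F}}(P))\le\Aut_{\mathcal{F}_0}(P)$ for every $P\le S_0$. Thus, if in addition $\mathfrak{hyp}(\mathcal{F})\le S_0$, then $\mathcal{F}_0$ has $p$-power index in $\mathcal{F}$.
   Context: A subsystem $\mathcal{F}_0$ over $S_0$ is weakly normal in $\mathcal{F}$ (in the sense of Aschbacher) if $S_0$ is strongly closed in $\mathcal{F}$, $\mathcal{F}_0$ is saturated, $\mathcal{F}_0$ is $\mathcal{F}$-invariant (for $P\le Q\le S_0$ and $\phi\in\Hom_{\mathcal{F}}(Q,S_0)$, $\phi\Hom_{\mathcal{F}_0}(P,Q)\phi^{-1}\subseteq\Hom_{\mathcal{F}_0}(\phi P,\phi Q)$), and the Frattini condition holds (every $\phi\in\Hom_{\mathcal{F}}(P,S_0)$ with $P\le S_0$ factors as $\alpha\circ\phi_0$ with $\phi_0\in\Hom_{\mathcal{F}_0}(P,S_0)$, $\alpha\in\Aut_{\mathcal{F}}(S_0)$). The hyperfocal subgroup is $\mathfrak{hyp}(\mathcal{F})=\langle \phi(s)s^{-1}\mid s\in P\le S,\ \phi\in O^p(\Aut_{\mathcal{F}}(P))\rangle$. A subsystem $\mathcal{F}_0$ over $S_0\le S$ has $p$-power index in $\mathcal{F}$ if $\mathfrak{hyp}(\mathcal{F})\le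 S_0$ and $O^p(\Aut_{\mathcal{F}}(P))\le\Aut_{\mathcal{F}_0}(P)$ for each $P\le S_0$. *)

From mathcomp Require Import all_boot all_fingroup all_solvable.
Set Implicit Arguments. Unset Strict Implicit. Unset Printing Implicit Defensive.
Import GroupScope.

(* Fusion systems over subgroups of a finite group gT.  A morphism P -> _
   is a finite function gT -> gT, equal to 1 outside its domain P. *)
Section FusionDefs.
Variable gT : finGroupType.
Implicit Types (P Q R S : {set gT}) (f g : {ffun gT -> gT}).
Implicit Types (F : {set gT} -> {set {ffun gT -> gT}}).

Definition inj_hom P Q f : bool :=
  [&& [forall x in P, forall y in P, f (x * y) == f x * f y],
      [forall x in P, forall y in P, (f x == f y) ==> (x == y)],
      f @: P \subset Q &
      [forall x, (x \notin P) ==> (f x == 1)]].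

Definition cmap P (g : gT) : {ffun gT -> gT} :=
  [ffun x => if x \in P then x ^ g else 1].

Definition fcomp P (psi phi : {ffun gT -> gT}) : {ffun gT -> gT} :=
  [ffun x => if x \in P then psi (phi x) else 1].

Definition finv P f : {ffun gT -> gT} :=
  [ffun y => if y \in f @: P then odflt 1 [pick x in P | f x == y] else 1].

(* A (candidate) fusion system: F P = Hom_F(P, S) (all morphisms out of P). *)
Definition homF (F : {set gT} -> {set {ffun gT -> gT}}) P Q :=
  [set f in F P | f @: P \subset Q].

Definition homS S P Q := [set cmap P g | g in S & P :^ g \subset Q].

Definition is_fusion_system S (F : {set gT} -> {set {ffun gT -> gT}}) : Prop :=
  [/\ (forall P Q : {group gT}, P \subset S -> Q \subset S ->
         homS S P Q \subset homF F P Q),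
      (forall P : {group gT}, P \subset S ->
         F P \subset [set f | inj_hom P S f]),
      (forall (P : {group gT}) f, P \subset S -> f \in F P ->
         finv P f \in F (f @: P)) &
      (forall (R P : {group gT}) phi psi, R \subset S -> P \subset S ->
         phi \in homF F R P -> psi \in F P -> fcomp R psi phi \in F R)].

Definition pfun P (a : {perm gT}) : {ffun gT -> gT} :=
  [ffun x => if x \in P then a x else 1].

Definition AutF (F : {set gT} -> {set {ffun gT -> gT}}) P :=
  [set a in Aut P | pfun P a \in F P].

Definition AutS S P := AutF (fun P => homS S P S) P.

Definition Fconj (F : {set gT} -> {set {ffun gT -> gT}}) P Q :=
  exists2 f, f \in F P & Q = f @: P.

Definition fully_normalized S F (P : {set gT}) :=
  forall Q : {group gT}, Fconj F P Q -> #|'N_S(Q)| <= #|'N_S(P)|.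

Definition fully_centralized S F (P : {set gT}) :=
  forall Q : {group gT}, Fconj F P Q -> #|'C_S(Q)| <= #|'C_S(P)|.

(* N_phi = { g in N_S(P) | phi c_g phi^-1 in Aut_S(phi P) } *)
Definition Nphi S P f :=
  [set g in 'N_S(P) |
     fcomp (f @: P) f (fcomp (f @: P) (cmap P g) (finv P f))
       \in homS S (f @: P) (f @: P)].

(* Saturation (Broto-Levi-Oliver, Def. 1.2) *)
Definition saturated (p : nat) S F : Prop :=
  is_fusion_system S F /\
  (forall P : {group gT}, P \subset S ->
     fully_normalized S F P ->
       fully_centralized S F P /\ p.-Sylow(AutF F P) (AutS S P)) /\
  (forall (P : {group gT}) f, P \subset S -> f \in F P ->
     fully_centralized S F (f @: P) ->
     exists2 h, h \in F (Nphi S P f) & {in P, forall x, h x = f x}).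

Definition subsystem (S0 : {set gT}) (F0 F : {set gT} -> {set {ffun gT -> gT}}) : Prop :=
  forall P : {group gT}, P \subset S0 -> F0 P \subset F P.

Definition strongly_closed (S0 : {set gT}) F : Prop :=
  forall (P : {group gT}) f, P \subset S0 -> f \in F P -> f @: P \subset S0.

Definition F_invariant (S0 : {set gT}) (F0 F : {set gT} -> {set {ffun gT -> gT}}) : Prop :=
  forall (P Q : {group gT}) phi psi,
    P \subset Q -> Q \subset S0 -> phi \in homF F Q S0 -> psi \in homF F0 P Q ->
    fcomp (phi @: P) phi (fcomp (phi @: P) psi (finv Q phi))
      \in homF F0 (phi @: P) (phi @: Q).

Definition frattini_cond (S0 : {set gT}) (F0 F : {set gT} -> {set {ffun gT -> gT}}) : Prop :=
  forall (P : {group gT}) phi, P \subset S0 -> phi \in homF F P S0 ->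
    exists2 phi0, phi0 \in homF F0 P S0 &
      exists2 alpha, alpha \in homF F S0 S0 & phi = fcomp P alpha phi0.

Definition weakly_normal (p : nat) (S0 : {set gT}) (F0 F : {set gT} -> {set {ffun gT -> gT}}) : Prop :=
  [/\ strongly_closed S0 F, saturated p S0 F0, subsystem S0 F0 F,
      F_invariant S0 F0 F & frattini_cond S0 F0 F].

End FusionDefs.

Definition Op_res (p : nat) (hT : finGroupType) (G : {set hT}) : {set hT} :=
  \bigcap_(N : {group hT} | (N <| G) && p.-group (G / N)) N.

Definition hyp (p : nat) (gT : finGroupType) (S : {set gT})
    (F : {set gT} -> {set {ffun gT -> gT}}) : {set gT} :=
  <<\bigcup_(P : {group gT} | P \subset S)
      [set (a : {perm gT}) s * s^-1 | s in P, a in Op_res p (AutF F P)]>>.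

Definition p_power_index (p : nat) (gT : finGroupType) (S S0 : {set gT})
    (F0 F : {set gT} -> {set {ffun gT -> gT}}) : Prop :=
  hyp p S F \subset S0 /\
  forall P : {group gT}, P \subset S0 -> Op_res p (AutF F P) \subset AutF F0 P.

From Pilot Require Import Defs.
From mathcomp Require Import all_boot all_fingroup all_solvable.
Set Implicit Arguments. Unset Strict Implicit. Unset Printing Implicit Defensive.
Import GroupScope.

(* Aut_F0(P) is normal in Aut_F(P) by F-invariance, so it suffices that every
   h in Aut_F(P) has a p-power in Aut_F0(P).  The Frattini condition writes h
   on P as a o psi with a in Aut_F(S0) and psi in Hom_F0(P, S0); F-invariance
   lets one move a past further F0-morphisms, so this factorization is
   multiplicative and h^(p^m) factors through a^(p^m).  For m large enough,
   a^(p^m) lies in O^p(Aut_F(S0)) <= Aut_F0(S0), whence h^(p^m) is in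
   Aut_F0(P). *)

Section Residual.
Variables (p : nat) (hT : finGroupType) (G : {group hT}).

Lemma expn_mem_Op_res x : x \in G -> x ^+ (p ^ logn p #|G|) \in Op_res p G.
Proof.
move=> Gx; apply/bigcapP=> N /andP[nNG pGN].
have Gx_N : coset N x \in G / N by apply: mem_quotient.
apply: coset_idr; first by rewrite groupX ?(subsetP (normal_norm nNG)).
rewrite morphX ?(subsetP (normal_norm nNG)) //; apply/eqP; rewrite -order_dvdn.
rewrite -p_part -(part_pnat_id (mem_p_elt pGN Gx_N)) partn_dvd //.
exact: dvdn_trans (order_dvdG Gx_N) (dvdn_quotient G N).
Qed.

Lemma Op_res_sub_normal (N : {group hT}) : prime p -> N <| G ->
  {in G, forall x, exists m, x ^+ (p ^ m) \in N} -> Op_res p G \subset N.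
Proof.
move=> p_pr nNG Np; apply: (bigcap_inf N); rewrite nNG /=.
apply/pgroupP=> q q_pr /(Cauchy q_pr)[_ /morphimP[x Nx Gx ->] oxN].
have [m xmN] := Np x Gx.
have : #[coset N x] %| p ^ m.
  by rewrite order_dvdn -morphX //; apply/eqP/coset_id.
by rewrite oxN Euclid_dvdX // dvdn_prime2 // => /andP[].
Qed.

End Residual.

Section FusionMaps.
Variable gT : finGroupType.
Implicit Types (P : {set gT}) (f g : {ffun gT -> gT}).

Lemma pfun_in P (a : {perm gT}) x : x \in P -> pfun P a x = a x.
Proof. by rewrite ffunE => ->. Qed.

Lemma pfun_out P (a : {perm gT}) x : x \notin P -> pfun P a x = 1.
Proof. by rewrite ffunE => /negbTE ->. Qed.

Lemma fcomp_in P f g x : x \in P -> fcomp P f g x = f (g x).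
Proof. by rewrite ffunE => ->. Qed.

Lemma fcomp_out P f g x : x \notin P -> fcomp P f g x = 1.
Proof. by rewrite ffunE => /negbTE ->. Qed.

Lemma imset_pfun P (Q : {set gT}) (a : {perm gT}) :
  Q \subset P -> pfun P a @: Q = a @: Q.
Proof. by move=> sQP; apply: eq_in_imset => x /(subsetP sQP)/pfun_in. Qed.

Lemma finv_pfun (P : {group gT}) (a : {perm gT}) y : a \in Aut P -> y \in P ->
  Defs.finv P (pfun P a) y = a^-1 y.
Proof.
move=> AutPa Py; have Pa'y : a^-1 y \in P by rewrite Aut_closed ?groupV.
rewrite ffunE imset_pfun // ifT; last first.
  by apply/imsetP; exists (a^-1 y); rewrite ?permKV.
case: pickP => [x /andP[Px /eqP <-] | /(_ (a^-1 y))] /=.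
  by rewrite pfun_in // permK.
by rewrite Pa'y pfun_in // permKV eqxx.
Qed.

Lemma inj_hom_pfun_Aut (P : {group gT}) Q f : inj_hom P Q f -> f @: P \subset P ->
  exists2 a, a \in Aut P & pfun P a = f.
Proof.
case/and4P=> /forall_inP fM /forall_inP f_inj _ /forallP f1 sfPP.
have Pf x : x \in P -> f x \in P.
  by move=> Px; apply: (subsetP sfPP); apply: imset_f.
pose g x := if x \in P then f x else x.
have g_inj : injective g.
  move=> x y; rewrite /g; case: ifPn => Px; case: ifPn => Py e.
  - by apply/eqP; move/forall_inP: (f_inj x Px) => /(_ y Py); rewrite e eqxx.
  - by rewrite -e Pf in Py.
  - by rewrite e Pf in Px.
  - by [].
exists (perm g_inj); last first.
  apply/ffunP=> x; rewrite ffunE permE /g; case: (boolP (x \in P)) => // nPx.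
  by move/implyP: (f1 x) => /(_ nPx) /eqP.
rewrite inE; apply/andP; split.
  by apply/subsetP=> x; rewrite inE permE /g; case: ifP => //; rewrite eqxx.
apply/morphicP=> x y Px Py; rewrite !permE /g Px Py groupM //.
by move/forall_inP: (fM x Px) => /(_ y Py) /eqP.
Qed.

End FusionMaps.

Section FusionSystem.
Variables (gT : finGroupType) (S : {group gT}).
Variable F : {set gT} -> {set {ffun gT -> gT}}.
Hypothesis fsF : is_fusion_system S F.

Lemma fusion_inj_hom (P : {group gT}) f :
  P \subset S -> f \in F P -> inj_hom P S f.
Proof.
case: fsF => _ homF_inj _ _ sPS Ff.
by have := subsetP (homF_inj P sPS) f Ff; rewrite inE.
Qed.

Lemma fusion_mapsto (P : {group gT}) f x :
  P \subset S -> f \in F P -> x \in P -> f x \in S.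
Proof.
move=> sPS Ff Px; have /and4P[_ _ sfPS _] := fusion_inj_hom sPS Ff.
by apply: (subsetP sfPS); apply: imset_f.
Qed.

Lemma fusion_id (P : {group gT}) : P \subset S -> pfun P 1 \in F P.
Proof.
case: fsF => homS_F _ _ _ sPS.
have -> : pfun P 1 = cmap P 1 by apply/ffunP=> x; rewrite !ffunE perm1 conjg1.
have S_cmap1 : cmap P 1 \in homS S P S.
  by apply/imsetP; exists 1; rewrite ?inE ?group1 ?conjsg1.
by have := subsetP (homS_F P S sPS (subxx _)) _ S_cmap1; rewrite inE => /andP[].
Qed.

Lemma fusion_comp (R P : {group gT}) phi psi : R \subset S -> P \subset S ->
  phi \in homF F R P -> psi \in F P -> fcomp R psi phi \in F R.
Proof. by case: fsF => _ _ _; apply. Qed.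

Lemma fusion_homF (P : {group gT}) f :
  P \subset S -> f \in F P -> f \in homF F P S.
Proof.
move=> sPS Ff; rewrite inE Ff.
by apply/subsetP=> _ /imsetP[x Px ->]; exact: (fusion_mapsto sPS Ff Px).
Qed.

Lemma AutF_group_set (P : {group gT}) : P \subset S -> group_set (AutF F P).
Proof.
move=> sPS; apply/group_setP; split; first by rewrite inE group1 fusion_id.
move=> a b /setIdP[AutPa Fa] /setIdP[AutPb Fb]; rewrite inE groupM //=.
have -> : pfun P (a * b) = fcomp P (pfun P b) (pfun P a).
  apply/ffunP=> x; rewrite !ffunE; case: ifP => // Px.
  by rewrite permM Aut_closed.
apply: (fusion_comp sPS sPS _ Fb); rewrite inE Fa imset_pfun //.
by apply/subsetP=> _ /imsetP[x Px ->]; rewrite Aut_closed.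
Qed.

End FusionSystem.

Section Factorization.
Variables (gT : finGroupType) (S S0 P : {group gT}).
Variables (F F0 : {set gT} -> {set {ffun gT -> gT}}).
Hypotheses (fsF : is_fusion_system S F) (fs0 : is_fusion_system S0 F0).
Hypotheses (sS0S : S0 \subset S) (sPS0 : P \subset S0).

Definition factors_via (g x : {perm gT}) :=
  exists2 psi, psi \in F0 P & {in P, forall y, g (psi y) = x y}.

Lemma factors_via1 : factors_via 1 1.
Proof.
exists (pfun P 1); first exact: (fusion_id fs0 sPS0).
by move=> y Py; rewrite pfun_in // !perm1.
Qed.

Lemma factors_via_AutF0 g x :
  g \in AutF F0 S0 -> x \in Aut P -> factors_via g x -> x \in AutF F0 P.
Proof.
case/setIdP=> _ F0g AutPx [psi F0psi gpsi]; rewrite inE AutPx /=.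
have -> : pfun P x = fcomp P (pfun S0 g) psi.
  apply/ffunP=> y; rewrite !ffunE; case: ifP => // Py.
  by rewrite (fusion_mapsto fs0 sPS0 F0psi Py) gpsi.
exact: (fusion_comp fs0 sPS0 (subxx _) (fusion_homF fs0 sPS0 F0psi) F0g).
Qed.

Section Invariance.
Hypothesis invF0 : F_invariant S0 F0 F.

Lemma F_invariant_conj (h : {perm gT}) (Q : {group gT}) psi :
  h \in AutF F S0 -> h @: P = Q -> psi \in F0 P ->
  exists2 chi, chi \in F0 Q & {in P, forall y, chi (h y) = h (psi y)}.
Proof.
case/setIdP=> AutS0h Fh defQ F0psi.
have Fphi : pfun S0 h \in homF F S0 S0.
  rewrite inE Fh imset_pfun //.
  by apply/subsetP=> _ /imsetP[x S0x ->]; rewrite Aut_closed.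
have := invF0 sPS0 (subxx _) Fphi (fusion_homF fs0 sPS0 F0psi).
set chi := fcomp _ _ _ => /setIdP[F0chi _].
exists chi; first by rewrite -defQ -(imset_pfun _ sPS0).
move=> y Py; have S0y := subsetP sPS0 y Py.
have hPy : h y \in pfun S0 h @: P by rewrite imset_pfun // imset_f.
rewrite !fcomp_in // finv_pfun ?Aut_closed // permK pfun_in //.
exact: (fusion_mapsto fs0 sPS0 F0psi Py).
Qed.

Lemma factors_viaM g1 x1 g2 x2 : g2 \in AutF F S0 -> x2 \in Aut P ->
  factors_via g1 x1 -> factors_via g2 x2 -> factors_via (g2 * g1) (x2 * x1).
Proof.
move=> Fg2 AutPx2 [psi1 F0psi1 e1] [psi2 F0psi2 e2].
set h := g2^-1.
have Fh : h \in AutF F S0.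
  by rewrite (@groupV _ (Group (AutF_group_set fsF sS0S))).
have AutS0h : h \in Aut S0 by case/setIdP: Fh.
have [Q defQ] : exists Q : {group gT}, h @: P = Q.
  by exists (autm AutS0h @* P)%G; rewrite /= morphimEsub // autmE.
(* chi is the g2^-1-conjugate of psi1, so that g2 (chi (psi2 y)) = psi1 (x2 y). *)
have [chi F0chi chi_h] := F_invariant_conj Fh defQ F0psi1.
have psi2E y : y \in P -> psi2 y = h (x2 y) by move=> Py; rewrite -e2 // permK.
have sQS0 : Q \subset S0.
  rewrite -defQ; apply/subsetP=> _ /imsetP[y Py ->].
  by rewrite Aut_closed // (subsetP sPS0).
have psi2_Q : psi2 \in homF F0 P Q.
  rewrite inE F0psi2 -defQ; apply/subsetP=> _ /imsetP[y Py ->].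
  by rewrite psi2E // imset_f // Aut_closed.
exists (fcomp P chi psi2); first exact: (fusion_comp fs0 sPS0 sQS0 psi2_Q F0chi).
move=> y Py; rewrite fcomp_in // psi2E // chi_h ?Aut_closed //.
by rewrite !permM /h permKV e1 ?Aut_closed.
Qed.

Lemma factors_viaX g x n : g \in AutF F S0 -> x \in Aut P ->
  factors_via g x -> factors_via (g ^+ n) (x ^+ n).
Proof.
move=> Fg AutPx gx; elim: n => [|n IH].
  by rewrite !expg0; apply: factors_via1.
by rewrite !expgS; apply: factors_viaM.
Qed.

Lemma AutF0_conj h n : h \in AutF F P -> n \in AutF F0 P -> n ^ h \in AutF F0 P.
Proof.
case/setIdP=> AutPh Fh /setIdP[AutPn F0n]; rewrite inE groupJ //=.
set phi := pfun P h.
have phiP : phi @: P = P.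
  apply/eqP; rewrite imset_pfun // eqEcard (card_imset _ (@perm_inj _ h)).
  rewrite leqnn andbT.
  by apply/subsetP=> _ /imsetP[y Py ->]; rewrite Aut_closed.
have phi_S0 : phi \in homF F P S0 by rewrite inE Fh phiP.
have n_P : pfun P n \in homF F0 P P.
  rewrite inE F0n imset_pfun //.
  by apply/subsetP=> _ /imsetP[y Py ->]; rewrite Aut_closed.
have := invF0 (subxx _) sPS0 phi_S0 n_P; rewrite phiP => /setIdP[F0conj _].
suff -> : pfun P (n ^ h) =
          fcomp P phi (fcomp P (pfun P n) (Defs.finv P phi)) by [].
apply/ffunP=> y; have [Py | nPy] := boolP (y \in P); last first.
  by rewrite pfun_out ?fcomp_out.
rewrite pfun_in // !fcomp_in // /phi finv_pfun // !pfun_in ?Aut_closed ?groupV //.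
by rewrite conjgE !permM.
Qed.

End Invariance.

Lemma frattini_factors_via h : frattini_cond S0 F0 F ->
  h \in AutF F P -> exists2 a, a \in AutF F S0 & factors_via a h.
Proof.
move=> frat /setIdP[AutPh Fh].
have h_S0 : pfun P h \in homF F P S0.
  rewrite inE Fh imset_pfun //; apply/subsetP=> _ /imsetP[y Py ->].
  by rewrite (subsetP sPS0) // Aut_closed.
have [phi0 /setIdP[F0phi0 _]] := frat P _ sPS0 h_S0.
case=> alpha /setIdP[Falpha alphaS0] defh.
have alpha_inj := fusion_inj_hom fsF sS0S Falpha.
have [a AutS0a defa] := inj_hom_pfun_Aut alpha_inj alphaS0.
exists a; first by rewrite inE AutS0a defa.
exists phi0 => // y Py.
have := congr1 (fun f : {ffun gT -> gT} => f y) defh.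
rewrite /= pfun_in // fcomp_in // -defa pfun_in //.
exact: (fusion_mapsto fs0 sPS0 F0phi0 Py).
Qed.

Lemma Op_res_AutF_sub p : prime p -> subsystem S0 F0 F ->
  F_invariant S0 F0 F -> frattini_cond S0 F0 F ->
  Op_res p (AutF F S0) \subset AutF F0 S0 ->
  Op_res p (AutF F P) \subset AutF F0 P.
Proof.
move=> p_pr subF0 invF0 frat OpS0.
have sPS := subset_trans sPS0 sS0S.
pose AutFS0 := Group (AutF_group_set fsF sS0S).
pose AutFP := Group (AutF_group_set fsF sPS).
pose AutF0P := Group (AutF_group_set fs0 sPS0).
have sF0F : AutF0P \subset AutFP.
  apply/subsetP=> a /setIdP[AutPa F0a]; rewrite inE AutPa.
  exact: (subsetP (subF0 P sPS0) _ F0a).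
have nF0F : AutFP \subset 'N(AutF0P).
  apply/normsP=> h Fh; apply/eqP; rewrite eqEcard cardJg leqnn andbT.
  by apply/subsetP=> _ /imsetP[n F0n ->]; apply: AutF0_conj.
apply: (@Op_res_sub_normal _ _ AutFP AutF0P) => //; first by rewrite /normal sF0F.
move=> h Fh; have [a Fa ah] := frattini_factors_via frat Fh.
exists (logn p #|AutFS0|).
have AutPh : h \in Aut P by case/setIdP: Fh.
apply: factors_via_AutF0 (groupX _ AutPh) (factors_viaX invF0 _ Fa AutPh ah).
by apply: (subsetP OpS0); apply: (expn_mem_Op_res p (G := AutFS0)).
Qed.

End Factorization.

Theorem lemma4p1 (p : nat) (gT : finGroupType) (S S0 : {group gT})
    (F F0 : {set gT} -> {set {ffun gT -> gT}}) :
  prime p -> p.-group S -> saturated p S F ->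
  S0 \subset S -> weakly_normal p S0 F0 F ->
  Op_res p (AutF F S0) \subset AutF F0 S0 ->
  (forall P : {group gT}, P \subset S0 -> Op_res p (AutF F P) \subset AutF F0 P) /\
  (hyp p S F \subset S0 -> p_power_index p S S0 F0 F).
Proof.
move=> p_pr _ [fsF _] sS0S [_ [fs0 _] subF0 invF0 frat] OpS0.
have OpP (P : {group gT}) : P \subset S0 -> Op_res p (AutF F P) \subset AutF F0 P.
  move=> sPS0.
  exact: (Op_res_AutF_sub fsF fs0 sS0S sPS0 p_pr subF0 invF0 frat OpS0).
by split=> // hypS0; split.
Qed.
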